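(* In the model described in the context, Algorithm 1 with any threshold $t\ge\tau+f$ satisfies strong accuracy.
   Context: Model. An asynchronous system has client processes (writers, readers, auditors) and $n$ storage objects $o_1,\dots,o_n$. Each $o_k$ is a linearisable loggable read/write register with a log $L_k$ (initially empty). Its rw-write($b$) stores a block; rw-read() returns the current block (or $\perp$) and appends $\langle p_r,\mathit{label}(b)\rangle$ to $L_k$, where $p_r$ is the reader and $\mathit{label}(b)$ identifies the value from which $b$ was derived; rw-getLog() returns $L_k$. A multi-writer multi-reader register over values $\mathbb{V}$ is emulated by information dispersal. An a-write($v$) encodes $v$ into $b_{v_1},\dots,b_{v_n}$ with $b_{v_k}$ sent to $o_k$. Any $\tau$ distinct blocks of $v$ recover $v$, and fewer do not. Reads are fast, concurrency is unlimited, and writes may remain incomplete. Faults. At most $f$ objects are faulty; a faulty object may crash, omit its block, omit log records from auditors, and report records of nonexistent reads (for arbitrary readers and values). Providing set $P_{p_r,v}$: the set of objects that received a write of $b_{v_k}$ and responded $b_{v_k}$ to a read of $p_r$. The value $v$ is effectively read by $p_r$ iff $|P_{p_r,v}|\ge\tau$. Algorithm 1 (a-audit with threshold $t$): 1. Invoke rw-getLog on all $n$ objects in parallel, and wait for responses from at least $n-f$; let $L[k]$ be the log received from $o_k$. 2. For every record $\langle p_r,\mathit{label}(v)\rangle$ in some $L[k]$, let $\mathcal{E}_{p_r,v}=\{k:\langle p_r,\mathit{label}(v)\rangle\in L[k]\}$, and add it to $E_A$ iff $|\mathcal{E}_{p_r,v}|\ge t$. 3. Return $E_A$. Strong accuracy: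 for every correct reader $p_r$ and every value $v$, $|P_{p_r,v}|<\tau$ before the audit implies $\mathcal{E}_{p_r,v}\notin E_A$. *)

From mathcomp Require Import all_boot.
Set Implicit Arguments. Unset Strict Implicit. Unset Printing Implicit Defensive.

Section Model.
Variables (Reader Val Lab : eqType) (label : Val -> Lab).

(* A log record <p_r, label(b)>; label is [None] when the read returned bottom. *)
Definition record := (Reader * option Lab)%type.

(* Operations linearized at a single storage object o_k.  Blocks are
   identified by the value they were derived from: at object k, the block of
   value v is b_{v_k}. *)
Inductive op :=
| OWrite of Val
| ORead of Reader & option Val
| OGetLog of seq record.

(* A timed history of one object: (global time, operation), in linearization
   order. *)
Definition history := seq (nat * op).

Definition last_write (pre : history) : option Val :=
  foldl (fun acc (ev : nat * op) => if ev.2 is OWrite v then Some v else acc)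
        None pre.

Definition read_record (ev : nat * op) : option record :=
  if ev.2 is ORead p r then Some (p, omap label r) else None.

Definition log_of (pre : history) : seq record := pmap read_record pre.

Definition correct_hist (h : history) : Prop :=
  forall i, i < size h ->
    match (nth (0, OGetLog [::]) h i).2 with
    | OWrite _ => True
    | ORead _ r => r = last_write (take i h)
    | OGetLog L => L = log_of (take i h)
    end.

Definition occurs_by (h : history) (P : op -> bool) (e : nat) : bool :=
  has (fun ev : nat * op => (ev.1 <= e) && P ev.2) h.

Definition is_write_of (v : Val) (o : op) : bool :=
  if o is OWrite w then w == v else false.
Definition is_read_of (p : Reader) (v : Val) (o : op) : bool :=
  if o is ORead q (Some w) then (q == p) && (w == v) else false.
End Model.

Section Audit.
Variables (n : nat) (Reader Val Lab : eqType) (label : Val -> Lab).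

Definition providing (h : 'I_n -> history Reader Val Lab) (p : Reader) (v : Val)
  (e : nat) : {set 'I_n} :=
  [set k | occurs_by (h k) (is_write_of v) e &&
           occurs_by (h k) (is_read_of p v) e].

(* Responses received by the auditor in step 1 of Algorithm 1:
   [resp k = Some L] iff o_k responded with log L. *)
Definition audit_responses := 'I_n -> option (seq (record Reader Lab)).

Definition evidence (resp : audit_responses) (rc : record Reader Lab) : {set 'I_n} :=
  [set k | if resp k is Some L then rc \in L else false].

Definition audit_reports (t : nat) (resp : audit_responses)
  (rc : record Reader Lab) : bool := t <= #|evidence resp rc|.

Definition valid_audit (f : nat) (h : 'I_n -> history Reader Val Lab)
  (resp : audit_responses) (e : nat) : Prop :=
  (n - f <= #|[set k | resp k != None]|) /\
  forall k L, resp k = Some L ->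
    exists2 i, i < size (h k) &
      ((nth (0, @OGetLog Reader Val Lab [::]) (h k) i).1 <= e) /\
      ((nth (0, @OGetLog Reader Val Lab [::]) (h k) i).2 = @OGetLog Reader Val Lab L).
End Audit.

From mathcomp Require Import all_boot.

Set Implicit Arguments.
Unset Strict Implicit.
Unset Printing Implicit Defensive.

(* A correct object that logs <p, label v> by the audit time e must have
   responded b_v to a read of p (label is injective, so the record determines
   v), and by linearizability b_v was written to it before that read; both
   events precede the getLog, hence happen by e. So
   every correct object in the evidence set E_{p,v} lies in the providing set
   P_{p,v}, and |E_{p,v}| <= |F| + |P_{p,v}| < f + tau <= t. *)

Section CorrectHistory.
Variables (Reader Val Lab : eqType) (label : Val -> Lab).
Notation hist := (history Reader Val Lab).
Notation ev0 := (0, @OGetLog Reader Val Lab [::]).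
Arguments OWrite {Reader Val Lab} _.
Arguments ORead {Reader Val Lab} _ _.
Arguments OGetLog {Reader Val Lab} _.

Lemma last_write_nth (pre : hist) v : last_write pre = Some v ->
  exists2 j, j < size pre & (nth ev0 pre j).2 = OWrite v.
Proof.
elim/last_ind: pre => [|pre ev IHpre] //.
rewrite /last_write foldl_rcons -/(last_write pre) size_rcons.
case: ev => tm [w [<-]|q r|L] /=.
- by exists (size pre); rewrite // nth_rcons ltnn eqxx.
all: by case/IHpre=> j lt_j wr_j; exists j; [exact: ltnW | rewrite nth_rcons lt_j].
Qed.

Lemma mem_log_of (pre : hist) p v : injective label ->
  (p, Some (label v)) \in log_of label pre ->
  exists2 j, j < size pre & (nth ev0 pre j).2 = ORead p (Some v).
Proof.
move=> label_inj; rewrite /log_of; elim: pre => [|[tm o] pre IHpre] //=.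
have IH : (p, Some (label v)) \in pmap (read_record label) pre ->
    exists2 j, j < (size pre).+1 & (nth ev0 ((tm, o) :: pre) j).2 = ORead p (Some v).
  by case/IHpre=> j lt_j rd_j; exists j.+1.
case: o IH => [w|q r|L] IH //=; rewrite in_cons => /predU1P[|/IH //].
by case: r {IH} => [w|] //= [-> /label_inj ->]; exists 0.
Qed.

Lemma correct_read_after_write (h : hist) j p v : correct_hist label h ->
  j < size h -> (nth ev0 h j).2 = ORead p (Some v) ->
  exists2 k, k < j & (nth ev0 h k).2 = OWrite v.
Proof.
move=> hC lt_j rd_j; have := hC j lt_j; rewrite rd_j => /esym/last_write_nth.
by case=> k; rewrite size_take lt_j => lt_k; rewrite nth_take //; exists k.
Qed.

Lemma correct_logged_read (h : hist) i L p v :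
  injective label -> correct_hist label h ->
  i < size h -> (nth ev0 h i).2 = OGetLog L -> (p, Some (label v)) \in L ->
  exists2 j, j < i & (nth ev0 h j).2 = ORead p (Some v).
Proof.
move=> label_inj hC lt_i gl_i; have := hC i lt_i; rewrite gl_i => ->.
case/mem_log_of=> // j; rewrite size_take lt_i => lt_j.
by rewrite nth_take //; exists j.
Qed.

Lemma occurs_by_before (h : hist) (P : pred (op Reader Val Lab)) i j e :
  sorted leq [seq ev.1 | ev <- h] -> j <= i -> i < size h ->
  (nth ev0 h i).1 <= e -> P (nth ev0 h j).2 -> occurs_by h P e.
Proof.
move=> h_sorted le_ji lt_i le_e P_j; have lt_j := leq_ltn_trans le_ji lt_i.
apply/(has_nthP ev0); exists j => //; rewrite P_j andbT.
apply: leq_trans le_e.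
have := sorted_leq_nth leq_trans leqnn 0 h_sorted.
by move/(_ j i); rewrite !inE size_map !(nth_map ev0) //; apply.
Qed.

Lemma correct_logged_read_provides (h : hist) i e L p v :
  injective label -> sorted leq [seq ev.1 | ev <- h] -> correct_hist label h ->
  i < size h -> (nth ev0 h i).1 <= e -> (nth ev0 h i).2 = OGetLog L ->
  (p, Some (label v)) \in L ->
  occurs_by h (is_write_of v) e && occurs_by h (is_read_of p v) e.
Proof.
move=> label_inj h_sorted hC lt_i le_e gl_i logged.
have [j lt_ji rd_j] := correct_logged_read label_inj hC lt_i gl_i logged.
have [k lt_kj wr_k] := correct_read_after_write hC (ltn_trans lt_ji lt_i) rd_j.
apply/andP; split.
- apply: (occurs_by_before h_sorted (ltnW (ltn_trans lt_kj lt_ji)) lt_i le_e).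
  by rewrite wr_k /= eqxx.
- apply: (occurs_by_before h_sorted (ltnW lt_ji) lt_i le_e).
  by rewrite rd_j /= !eqxx.
Qed.
End CorrectHistory.

Section Audit.
Variables (n f : nat) (Reader Val Lab : eqType) (label : Val -> Lab).
Hypothesis label_inj : injective label.
Variables (F : {set 'I_n}) (h : 'I_n -> history Reader Val Lab).
Variables (resp : audit_responses n Reader Lab) (e : nat).
Hypothesis h_sorted : forall k, sorted leq [seq ev.1 | ev <- h k].
Hypothesis h_correct : forall k, k \notin F -> correct_hist label (h k).
Hypothesis resp_valid : valid_audit f h resp e.

Lemma evidence_sub_faulty_providing p v :
  evidence resp (p, Some (label v)) \subset F :|: providing h p v e.
Proof.
apply/subsetP=> k; rewrite inE in_setU.
case resp_k: (resp k) => [L|] // logged.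
have [//|kNF] := boolP (k \in F).
have [i lt_i [le_e gl_i]] := resp_valid.2 k L resp_k.
rewrite inE; apply: correct_logged_read_provides lt_i le_e gl_i logged => //.
exact: h_correct.
Qed.

Lemma card_evidence_lt tau p v : #|F| <= f ->
  #|providing h p v e| < tau -> #|evidence resp (p, Some (label v))| < f + tau.
Proof.
move=> card_F card_P.
apply: leq_ltn_trans (subset_leq_card (evidence_sub_faulty_providing p v)) _.
apply: leq_ltn_trans (leq_card_setU _ _) _.
by rewrite -addnS leq_add.
Qed.
End Audit.

Theorem lemma7 (n f tau t : nat) (Reader Val Lab : eqType)
  (label : Val -> Lab) (label_inj : injective label)
  (F : {set 'I_n})                          (* the faulty objects *)
  (h : 'I_n -> history Reader Val Lab)      (* linearized timed histories *)
  (resp : audit_responses n Reader Lab)     (* logs received by the audit *)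
  (e : nat) :                               (* completion time of the audit *)
  tau + f <= t ->
  #|F| <= f ->
  (forall k, sorted leq [seq ev.1 | ev <- h k]) ->
  (forall k, k \notin F -> correct_hist label (h k)) ->
  valid_audit f h resp e ->
  forall (p : Reader) (v : Val),
    #|providing h p v e| < tau ->
    ~~ audit_reports t resp (p, Some (label v)).
Proof.
move=> le_t card_F h_sorted h_correct resp_valid p v card_P.
rewrite /audit_reports -ltnNge; apply: leq_trans le_t; rewrite addnC.
exact: (card_evidence_lt label_inj h_sorted h_correct resp_valid card_F card_P).
Qed.
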